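(* Let $G=(V,E)$ be a finite graph and suppose that both $I_1,\dots,I_d$ and $\bar I_1,\dots,\bar I_{\bar d}$ are partitions of $V$ into maximal independent sets characterizing $G$ as a mean valid graph, with $M_s=|I_s|$, $\bar M_s=|\bar I_s|$, $M_1\ge\dots\ge M_d$ and $\bar M_1\ge\dots\ge\bar M_{\bar d}$. Then $d=\bar d$ and $M_s=\bar M_s$ for all $s\in\{1,\dots,d\}$.
   Context: A partition $V=I_1\sqcup\dots\sqcup I_d$ ($d\ge2$) of the vertex set into pairwise disjoint maximal independent sets, ordered with $M_1\ge\dots\ge M_d$ where $M_s=|I_s|$, characterizes $G$ as a mean valid graph if every independent set $I$ of $G$ satisfies $\sum_{s=1}^d|I\cap I_s|/M_s\le1$. *)

From mathcomp Require Import all_boot all_order all_algebra.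
Set Implicit Arguments. Unset Strict Implicit. Unset Printing Implicit Defensive.
Import Order.TTheory GRing.Theory Num.Theory.

(* A finite simple graph: vertex type T (finite), adjacency e : rel T,
   assumed symmetric and irreflexive in the theorem. *)

Definition independent (T : finType) (e : rel T) (A : {set T}) : bool :=
  [forall x in A, forall y in A, ~~ e x y].

Definition max_independent (T : finType) (e : rel T) (A : {set T}) : bool :=
  maxset (independent e) A.

(* I : 'I_d -> {set T} is a partition of V = T into pairwise disjoint
   (nonempty) maximal independent sets, ordered by nonincreasing size
   (index s : 'I_d corresponds to the paper's s+1). *)
Definition mis_partition (T : finType) (e : rel T) (d : nat)
    (I : 'I_d -> {set T}) : Prop :=
  [/\ (forall s, max_independent e (I s)),
      (forall s, I s != set0),
      (forall s t, s != t -> [disjoint I s & I t]),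
      (\bigcup_(s < d) I s = [set: T]) &
      (forall s t : 'I_d, (s <= t)%N -> (#|I t| <= #|I s|)%N)].

Definition mean_valid_partition (T : finType) (e : rel T) (d : nat)
    (I : 'I_d -> {set T}) : Prop :=
  [/\ (2 <= d)%N, mis_partition e I &
      forall J : {set T}, independent e J ->
        (\sum_(s < d) ((#|J :&: I s|)%:R / (#|I s|)%:R) <= (1 : rat))%R].

(** Double counting: if [I] is mean valid and [I'] is a partition into
    independent sets, then for every set [P] of blocks of [I'] the fractions
    [c_s] of [I_s] covered by [P] lie in [[0,1]] and sum to at most [|P|].
    Taking all blocks gives [d <= d'].  Taking the [k] largest blocks, the
    covered vertices number [sum_s c_s M_s], which by a rearrangement
    argument (the [M_s] are nonincreasing) is at most [M_1 + ... + M_k].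
    So the prefix sums of the two size sequences dominate each other, hence
    coincide, and so do the sizes. *)

From mathcomp Require Import all_boot all_order all_algebra.
From mathcomp Require Import ring lra.
Set Implicit Arguments. Unset Strict Implicit. Unset Printing Implicit Defensive.
Import Order.TTheory GRing.Theory Num.Theory.

Lemma card_partition_sum (T : finType) n (B : 'I_n -> {set T}) (A : {set T}) :
  (forall s t, s != t -> [disjoint B s & B t]) -> \bigcup_(s < n) B s = setT ->
  #|A| = \sum_s #|B s :&: A|.
Proof.
move=> Bdis Bcov.
have BAdis i j : i != j -> [disjoint B i :&: A & B j :&: A].
  move/Bdis; rewrite -!setI_eq0 => /eqP BIB0.
  by rewrite setIACA setIid BIB0 set0I.
have BAcov : \bigcup_s (B s :&: A) = A by rewrite -big_distrl /= Bcov setTI.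
rewrite -sum1_card -{1}BAcov (partition_disjoint_bigcup _ _ BAdis).
by apply: eq_bigr => i _; rewrite sum1_card.
Qed.

Local Open Scope ring_scope.

Lemma big_ord_prefixS (R : nmodType) d (f : 'I_d -> R) (s : 'I_d) :
  \sum_(t < d | (t < s.+1)%N) f t = \sum_(t < d | (t < s)%N) f t + f s.
Proof.
rewrite (bigD1 s) //= addrC; congr (_ + _); apply: eq_bigl => t.
by rewrite ltnS (ltn_neqAle t s) andbC.
Qed.

Lemma weighted_sum_le_prefix_sum (R : realDomainType) d (x c : 'I_d -> R) k :
  (forall s, 0 <= x s) -> (forall s t : 'I_d, (s <= t)%N -> x t <= x s) ->
  (forall s, 0 <= c s <= 1) -> \sum_s c s <= \sum_(s < d | (s < k)%N) 1 ->
  \sum_s c s * x s <= \sum_(s < d | (s < k)%N) x s.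
Proof.
move=> x_ge0 x_noninc c01 sum_c.
have [kd | dk] := ltnP k d; last first.
  have -> : \sum_(s < d | (s < k)%N) x s = \sum_s x s.
    by apply: eq_bigl => s; rewrite (leq_trans (ltn_ord s) dk).
  by apply: ler_sum => s _; have := x_ge0 s; case/andP: (c01 s); nra.
(* Every term of the difference dominates the same term with [x s] replaced
   by the threshold [x_k]. *)
pose m := x (Ordinal kd).
rewrite -subr_ge0 big_mkcond /= -sumrB.
apply: le_trans (_ : 0 <= m * (\sum_(s < d | (s < k)%N) 1 - \sum_s c s)) _.
  by rewrite mulr_ge0 ?subr_ge0 ?x_ge0.
rewrite mulrBr big_mkcond /= !mulr_sumr -sumrB.
apply: ler_sum => s _; case/andP: (c01 s) => c_ge0 c_le1.
case: ifP => sk.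
  have : m <= x s by apply: x_noninc; rewrite /= ltnW.
  nra.
have : x s <= m by apply: x_noninc; rewrite /= leqNgt sk.
nra.
Qed.

Section MeanValidOverlap.

Variables (T : finType) (e : rel T) (d d' : nat).
Variables (I : 'I_d -> {set T}) (I' : 'I_d' -> {set T}).
Hypotheses (I_mean_valid : mean_valid_partition e I) (I'_part : mis_partition e I').

Lemma card_mis_block_gt0 s : 0 < (#|I s|%:R : rat).
Proof.
by case: I_mean_valid => _ [_ I_nz _ _ _] _; rewrite ltr0n card_gt0 I_nz.
Qed.

Lemma card_mis_block_overlap s :
  (#|I s|%:R : rat) = \sum_t (#|I' t :&: I s|%:R : rat).
Proof.
case: I'_part => _ _ I'_dis I'_cov _.
by rewrite (card_partition_sum (I s) I'_dis I'_cov) natr_sum.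
Qed.

Lemma sum_overlap_ratio_le (P : pred 'I_d') :
  \sum_s (\sum_(t | P t) (#|I' t :&: I s|%:R : rat)) / #|I s|%:R
    <= \sum_(t < d' | P t) 1.
Proof.
case: I_mean_valid => _ _ I_ineq; case: I'_part => I'_max _ _ _ _.
under eq_bigr => s _ do rewrite mulr_suml.
rewrite exchange_big /=; apply: ler_sum => t _.
exact: I_ineq _ (maxsetp (I'_max t)).
Qed.

Lemma mean_valid_size_le : (d <= d')%N.
Proof.
have sum1 n : (n%:R : rat) = \sum_(t < n) 1 by rewrite sumr_const card_ord.
rewrite -(ler_nat rat) (sum1 d) (sum1 d').
rewrite (eq_bigr (fun s => #|I s|%:R / #|I s|%:R)) => [|s _]; last first.
  by rewrite divff // lt0r_neq0 // card_mis_block_gt0.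
under eq_bigr => s _ do rewrite [X in X / _]card_mis_block_overlap.
exact: (sum_overlap_ratio_le predT).
Qed.

End MeanValidOverlap.

Lemma mean_valid_prefix_card_le (T : finType) (e : rel T) d
    (I I' : 'I_d -> {set T}) k :
  mean_valid_partition e I -> mis_partition e I' ->
  \sum_(t < d | (t < k)%N) (#|I' t|%:R : rat) <= \sum_(s < d | (s < k)%N) #|I s|%:R.
Proof.
move=> I_mv I'_part; have [_ [_ _ I_dis I_cov I_sorted] _] := I_mv.
pose c s := (\sum_(t < d | (t < k)%N) (#|I' t :&: I s|%:R : rat)) / #|I s|%:R.
have I_gt0 := card_mis_block_gt0 I_mv.
have -> : \sum_(t < d | (t < k)%N) (#|I' t|%:R : rat) = \sum_s c s * #|I s|%:R.
  under eq_bigr => t _ do rewrite (card_partition_sum (I' t) I_dis I_cov) natr_sum.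
  rewrite exchange_big /=; apply: eq_bigr => s _.
  by rewrite /c divfK ?lt0r_neq0 //; apply: eq_bigr => t _; rewrite setIC.
apply: weighted_sum_le_prefix_sum => [s | s t st | s |].
- exact: ler0n.
- by rewrite ler_nat I_sorted.
- rewrite divr_ge0 ?sumr_ge0 //= ler_pdivrMr // mul1r.
  rewrite (card_mis_block_overlap I I'_part) [leRHS](bigID (fun t : 'I_d => (t < k)%N)) /=.
  by rewrite lerDl sumr_ge0.
- exact: (sum_overlap_ratio_le I_mv I'_part).
Qed.

Theorem lemma9 (T : finType) (e : rel T)
    (e_sym : symmetric e) (e_irr : irreflexive e)
    (d d' : nat) (I : 'I_d -> {set T}) (I' : 'I_d' -> {set T}) :
  mean_valid_partition e I -> mean_valid_partition e I' ->
  d = d' /\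
  (forall (s : 'I_d) (s' : 'I_d'), nat_of_ord s = nat_of_ord s' ->
     #|I s| = #|I' s'|).
Proof.
move=> I_mv I'_mv; have [_ I_part _] := I_mv; have [_ I'_part _] := I'_mv.
have d_eq : d = d'.
  by apply/eqP; rewrite eqn_leq (mean_valid_size_le I_mv I'_part)
                                 (mean_valid_size_le I'_mv I_part).
subst d'; split=> // s s' /val_inj <-.
have prefix_eq k : \sum_(t < d | (t < k)%N) (#|I t|%:R : rat) =
                   \sum_(t < d | (t < k)%N) (#|I' t|%:R : rat).
  apply/le_anti; rewrite (mean_valid_prefix_card_le _ I_mv I'_part).
  by rewrite (mean_valid_prefix_card_le _ I'_mv I_part).
apply/eqP; rewrite -(eqr_nat rat); apply/eqP.
by have := prefix_eq s.+1; rewrite !big_ord_prefixS prefix_eq => /addrI.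
Qed.
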